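(* Consider any sequence of a total of $R$ operations, each of which is either an execution of the procedure $\textsc{Insert\_Rule}(r)$ or of the procedure $\textsc{Remove\_Rule}(r)$ (both described in the context), starting from the initial state. The worst-case time complexity of performing all of these operations is $O(RK\log M)$, where $K$ is the number of atoms and $M$ is the maximum number of overlapping rules per network switch (i.e. the maximum, over nodes $s$ and atoms $\alpha$, of the number of rules $r$ with $\mathrm{source}(r)=s$ whose interval contains $\alpha$).
   Context: Fix a positive integer $k$ and let $\mathsf{MIN}=0$, $\mathsf{MAX}=2^k$. A (forwarding) rule $r$ has: a half-closed interval $[\mathrm{lo}(r):\mathrm{hi}(r))$ of integers with $\mathsf{MIN}\le \mathrm{lo}(r)<\mathrm{hi}(r)\le\mathsf{MAX}$ (the interval corresponding to an IP prefix); a priority $\mathrm{priority}(r)$; and a directed edge $\mathrm{link}(r)$ of a fixed graph (the network topology), whose tail node is denoted $\mathrm{source}(r)$. Rules with the same source whose intervals overlap have pairwise distinct priorities. Atom representation: an ordered map $\mathfrak{M}$ (a balanced binary search tree with logarithmic-time insertion and lookup) from integers to atom identifiers, initialized to $\{\mathsf{MIN}\mapsto\alpha_0,\ \mathsf{MAX}\mapsto\alpha_\infty\}$; new identifiers are drawn from a counter increasing consecutively from $0$. For each key $n<\mathsf{MAX}$ with $n\mapsto\alpha$ in $\mathfrak{M}$, the atom $\alpha$ denotes the interval $[n:n')$ where $n'$ is the next larger key. For a rule $r$, $[\![r]\!]$ denotes the set of atoms whose intervals are contained in $[\mathrm{lo}(r):\mathrm{hi}(r))$. The procedure $\textsc{Create\_Atoms}^+(r)$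 inserts $\mathrm{lo}(r)$ and $\mathrm{hi}(r)$ into $\mathfrak{M}$ (each only if not already a key) with fresh identifiers, and returns the set $\Delta$ (of size at most 2) of delta-pairs $\alpha\mapsto\alpha'$, meaning that the interval previously denoted by the existing atom $\alpha$ is now split into $\alpha$ (lower part) and the new atom $\alpha'$ (upper part). Global state: $\mathit{label}[\ell]$, a set of atoms for each link $\ell$ (initially empty); $\mathit{owner}$, an array indexed by atoms where $\mathit{owner}[\alpha]$ is a hash table mapping a node $s$ to a balanced binary search tree $\mathit{owner}[\alpha][s]$ of the rules $r$ with $\mathrm{source}(r)=s$ and $\alpha\in[\![r]\!]$, ordered by priority (supporting insertion, removal, emptiness test and retrieval of the highest-priority rule). $\textsc{Insert\_Rule}(r)$: (1) $\Delta\gets\textsc{Create\_Atoms}^+(r)$; for each $\alpha\mapsto\alpha'$ in $\Delta$: set $\mathit{owner}[\alpha']\gets$ a copy of $\mathit{owner}[\alpha]$, and for each entry $s\mapsto \mathit{bst}$ in $\mathit{owner}[\alpha]$, let $r'$ be the highest-priority rule of $\mathit{bst}$ and add $\alpha'$ to $\mathit{label}[\mathrm{link}(r')]$. (2) For each $\alpha\in[\![r]\!]$: let $\mathit{bst}=\mathit{owner}[\alpha][\mathrm{source}(r)]$ and $r'$ its highest-priority rule (or none if empty); if there is no $r'$ or $\mathrm{priority}(r')<\mathrm{priority}(r)$, add $\alpha$ to $\mathit{label}[\mathrm{link}(r)]$ and, if $r'$ exists and $\mathrm{link}(r')\ne\mathrm{link}(r)$, remove $\alpha$ from $\mathit{label}[\mathrm{link}(r')]$;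 finally insert $r$ into $\mathit{bst}$. $\textsc{Remove\_Rule}(r)$: for each $\alpha\in[\![r]\!]$: let $\mathit{bst}=\mathit{owner}[\alpha][\mathrm{source}(r)]$, $r'$ its highest-priority rule; remove $r$ from $\mathit{bst}$; if $r'=r$, remove $\alpha$ from $\mathit{label}[\mathrm{link}(r)]$, and if $\mathit{bst}$ is now nonempty, add $\alpha$ to $\mathit{label}[\mathrm{link}(r'')]$ where $r''$ is the new highest-priority rule of $\mathit{bst}$. *)

From HB Require Import structures.
From mathcomp Require Import all_boot.
Set Implicit Arguments. Unset Strict Implicit. Unset Printing Implicit Defensive.

(* A link is a directed edge (tail, head) of the topology; nodes are nat. *)
Record rule := Rule { lo : nat; hi : nat; priority : nat; link : nat * nat }.

Definition source (r : rule) : nat := (link r).1.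

Definition rule_code (r : rule) := (lo r, hi r, priority r, link r).
Definition rule_decode (x : nat * nat * nat * (nat * nat)) :=
  let: (a, b, c, d) := x in Rule a b c d.
Lemma rule_codeK : cancel rule_code rule_decode. Proof. by case. Qed.
HB.instance Definition _ := Equality.copy rule (can_type rule_codeK).

(* Cost of a logarithmic-time operation on a balanced structure of size m *)
Definition lg (m : nat) : nat := (trunc_log 2 m).+1.

(* State.
   amap   : the ordered map M as a key-sorted association list key |-> atom id
   next_id: the fresh identifier counter
   label  : label[l] for each link l (a set of atoms, as a duplicate-free list)
   owner  : owner[alpha] : a hash table (association list) node |-> BST, the
            BST of rules being represented by the list of its elements. *)
Record state := St {
  amap : seq (nat * nat);
  next_id : nat;
  label : nat * nat -> seq nat;
  owner : nat -> seq (nat * seq rule)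
}.

Definition MAXK (k : nat) := 2 ^ k.

(* initial state: M = {MIN |-> alpha_0, MAX |-> alpha_inf} with ids 0 and 1 *)
Definition init_state (k : nat) : state :=
  St [:: (0, 0); (MAXK k, 1)] 2 (fun _ => [::]) (fun _ => [::]).

(* hash-table primitives (O(1) each) *)
Fixpoint hlookup (s : nat) (h : seq (nat * seq rule)) : seq rule :=
  match h with
  | [::] => [::]
  | (s', b) :: h' => if s' == s then b else hlookup s h'
  end.
Fixpoint hupdate (s : nat) (b : seq rule) (h : seq (nat * seq rule)) :=
  match h with
  | [::] => [:: (s, b)]
  | (s', b') :: h' => if s' == s then (s, b) :: h' else (s', b') :: hupdate s b h'
  end.

Definition top (b : seq rule) : option rule :=
  foldr (fun x acc => match acc with
                      | None => Some x
                      | Some y => if priority y < priority x then Some x else Some y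
                      end) None b.

(* label-set primitives (hash sets, O(1) each) *)
Definition set_add (x : nat) (l : seq nat) := if x \in l then l else x :: l.
Definition set_del (x : nat) (l : seq nat) := [seq y <- l | y != x].

Definition upd_label (st : state) (l : nat * nat) (f : seq nat -> seq nat) : state :=
  St (amap st) (next_id st)
     (fun l' => if l' == l then f (label st l) else label st l') (owner st).
Definition upd_owner (st : state) (a : nat) (h : seq (nat * seq rule)) : state :=
  St (amap st) (next_id st) (label st)
     (fun a' => if a' == a then h else owner st a').

(* Create_Atoms+ : insert key n (if absent); returns new state, the optional
   delta pair alpha |-> alpha', and the cost (one ordered-map lookup/insert). *)
Definition create_atom (n : nat) (st : state) : state * seq (nat * nat) * nat :=
  let m := amap st in
  let c := lg (size m) in
  if n \in unzip1 m then (st, [::], c)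
  else
    let below := [seq p <- m | p.1 < n] in
    let above := [seq p <- m | n < p.1] in
    let alpha := (last (0, 0) below).2 in
    let a' := next_id st in
    (St (below ++ (n, a') :: above) a'.+1 (label st) (owner st),
     [:: (alpha, a')], c).

(* atoms of the map, with their intervals [n : n') *)
Definition atom_intervals (m : seq (nat * nat)) : seq (nat * nat * nat) :=
  [seq (p.1.2, p.1.1, p.2.1) | p <- zip m (behead m)].

(* [[r]] : atoms whose interval is contained in [lo r : hi r) *)
Definition den (m : seq (nat * nat)) (r : rule) : seq nat :=
  [seq x.1.1 | x <- atom_intervals m & (lo r <= x.1.2) && (x.2 <= hi r)].

Definition enum_cost (m : seq (nat * nat)) (r : rule) : nat :=
  lg (size m) + size (den m r).

(* step (1) for one delta pair alpha |-> alpha' *)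
Definition process_delta (acc0 : state * nat) (d : nat * nat) : state * nat :=
  let: (st, c0) := acc0 in
  let: (a, a') := d in
  let own := owner st a in
  (* copying the hash table together with its BSTs *)
  let copy_cost := \sum_(e <- own) (size e.2).+1 in
  let st1 := upd_owner st a' own in
  foldl (fun (acc : state * nat) (e : nat * seq rule) =>
           let: (s, b) := e in
           let: (st', c) := acc in
           match top b with
           | None => (st', c + lg (size b))
           | Some r' => (upd_label st' (link r') (set_add a'), c + lg (size b) + 1)
           end) (st1, c0 + copy_cost) own.

(* step (2) for one atom alpha *)
Definition insert_at (r : rule) (acc : state * nat) (a : nat) : state * nat :=
  let: (st, c) := acc in
  let h := owner st a in
  let b := hlookup (source r) h in
  let c1 := c + 1 + lg (size b) in          (* hash lookup + retrieve max *)
  let st1 :=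
    match top b with
    | None => upd_label st (link r) (set_add a)
    | Some r' =>
        if priority r' < priority r then
          let st' := upd_label st (link r) (set_add a) in
          if link r' != link r then upd_label st' (link r') (set_del a) else st'
        else st
    end in
  (upd_owner st1 a (hupdate (source r) (r :: b) h),
   c1 + 2 + lg (size b)).                   (* label ops + BST insertion *)

Definition insert_rule (r : rule) (st : state) : state * nat :=
  let: (st1, d1, c1) := create_atom (lo r) st in
  let: (st2, d2, c2) := create_atom (hi r) st1 in
  let: (st3, c3) := foldl process_delta (st2, c1 + c2) (d1 ++ d2) in
  foldl (insert_at r) (st3, c3 + enum_cost (amap st3) r) (den (amap st3) r).

Definition remove_at (r : rule) (acc : state * nat) (a : nat) : state * nat :=
  let: (st, c) := acc in
  let h := owner st a in
  let b := hlookup (source r) h in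
  let b' := rem r b in
  let c1 := c + 1 + lg (size b) + lg (size b) in (* lookup + max + BST removal *)
  let st1 :=
    if top b == Some r then
      let st' := upd_label st (link r) (set_del a) in
      match top b' with
      | None => st'
      | Some r'' => upd_label st' (link r'') (set_add a)
      end
    else st in
  (upd_owner st1 a (hupdate (source r) b' h),
   c1 + 2 + lg (size b')).             (* emptiness test, new max, label ops *)

Definition remove_rule (r : rule) (st : state) : state * nat :=
  foldl (remove_at r) (st, enum_cost (amap st) r) (den (amap st) r).

Inductive op := Ins of rule | Rem of rule.

Definition step (st : state) (o : op) : state * nat :=
  match o with Ins r => insert_rule r st | Rem r => remove_rule r st end.

Fixpoint run_cost (st : state) (ops : seq op) : nat :=
  match ops with
  | [::] => 0
  | o :: os => (step st o).2 + run_cost (step st o).1 os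
  end.

Fixpoint states (st : state) (ops : seq op) : seq state :=
  match ops with
  | [::] => [:: st]
  | o :: os => st :: states (step st o).1 os
  end.

Definition upd_rules (rs : seq rule) (o : op) : seq rule :=
  match o with Ins r => r :: rs | Rem r => rem r rs end.

Fixpoint rule_sets (rs : seq rule) (ops : seq op) : seq (seq rule) :=
  match ops with
  | [::] => [:: rs]
  | o :: os => rs :: rule_sets (upd_rules rs o) os
  end.

Definition distinct_prios (rs : seq rule) : Prop :=
  forall r1 r2, r1 \in rs -> r2 \in rs -> r1 != r2 ->
    source r1 = source r2 -> lo r1 < hi r2 -> lo r2 < hi r1 ->
    priority r1 != priority r2.

Definition wf_rule (k : nat) (E : rel nat) (r : rule) : Prop :=
  lo r < hi r <= MAXK k /\ E (link r).1 (link r).2.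

Fixpoint valid_from (k : nat) (E : rel nat) (rs : seq rule) (ops : seq op) : Prop :=
  match ops with
  | [::] => True
  | o :: os =>
      match o with
      | Ins r => wf_rule k E r /\ r \notin rs
      | Rem r => wf_rule k E r /\ r \in rs
      end /\ distinct_prios (upd_rules rs o) /\ valid_from k E (upd_rules rs o) os
  end.

(* K: number of atoms (keys < MAX of the ordered map) after all operations *)
Definition num_atoms (k : nat) (ops : seq op) : nat :=
  count (fun p : nat * nat => p.1 < MAXK k) (amap (last (init_state k) (states (init_state k) ops))).

Definition overlap_at (rs : seq rule) (s n n' : nat) : nat :=
  count (fun r => (source r == s) && (lo r <= n) && (n' <= hi r)) rs.

(* max over atoms and nodes (nodes that are not the source of an installed
   rule contribute 0) *)
Definition max_overlap (st : state) (rs : seq rule) : nat :=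
  \max_(x <- atom_intervals (amap st)) \max_(s <- map source rs)
     overlap_at rs s x.1.2 x.2.

(* M: maximum over all points of time of the sequence *)
Definition max_overlap_run (k : nat) (ops : seq op) : nat :=
  \max_(p <- zip (states (init_state k) ops) (rule_sets [::] ops)) max_overlap p.1 p.2.

(* Every atom owns, for each node s, a BST holding exactly the installed rules of source s
   whose interval contains the atom.  Rule endpoints are always keys of the ordered map, so
   splitting an atom does not change these sets and the copy made for the new atom is again
   correct.  Hence every BST has at most M elements and the constant number of BST operations
   spent on each touched atom costs O(log M); an operation touches at most K atoms, since atoms
   are never merged.  The only other cost is the copy of an owner table when an atom is split:
   a table gains at most one entry and one rule per operation, so a copy costs O(R), and at
   most K copies happen during the whole run. *)

From mathcomp Require Import all_boot zify.
Set Implicit Arguments. Unset Strict Implicit. Unset Printing Implicit Defensive.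

Local Notation table := (seq (nat * seq rule)).

Lemma perm_rem (T : eqType) (x : T) (s t : seq T) :
  perm_eq s t -> perm_eq (rem x s) (rem x t).
Proof. by move=> st; apply/permP => P; rewrite !count_rem (permP st) (perm_mem st). Qed.

Lemma filter_rem (T : eqType) (P : pred T) x (s : seq T) :
  filter P (rem x s) = if P x then rem x (filter P s) else filter P s.
Proof.
elim: s => [|y s IHs] /=; first by case: (P x).
case: (eqVneq y x) => [->|neq_yx]; first by case: (P x) => //=; rewrite eqxx.
by rewrite /= IHs; case: (P y); case: (P x) => //=; rewrite (negbTE neq_yx).
Qed.

Lemma uniq_map_inj_in (T U : eqType) (f : T -> U) (s : seq T) :
  uniq (map f s) -> {in s &, injective f}.
Proof.
elim: s => [|a s IHs] //= /andP[fa_s uniq_fs] x y.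
rewrite !inE => /predU1P[->|xs] /predU1P[->|ys] // fxy.
- by move: fa_s; rewrite fxy map_f.
- by move: fa_s; rewrite -fxy map_f.
- exact: IHs.
Qed.

Lemma lg_le n : 0 < n -> lg n <= n.
Proof. by case: n => // n _; apply: leq_trans (ltn_expl _ (isT : 1 < 2)) (trunc_logP _ _). Qed.

Lemma lg_leS n : lg n <= n.+1.
Proof. by case: n => [|n]; [rewrite /lg trunc_log0 | apply: leqW; exact: lg_le]. Qed.

Lemma leq_lg m n : m <= n -> lg m <= lg n.
Proof. by move=> le_mn; rewrite /lg ltnS leq_trunc_log. Qed.

Lemma hlookup_hupdate s s' b h :
  hlookup s' (hupdate s b h) = if s == s' then b else hlookup s' h.
Proof.
elim: h => [|[s0 b0] h IHh] //=.
case: (eqVneq s0 s) => [->|neq_s0s] /=; first by case: (s == s').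
by rewrite IHh; case: (eqVneq s0 s') => // <-; rewrite eq_sym (negbTE neq_s0s).
Qed.

Definition table_weight (h : table) : nat := \sum_(e <- h) (size e.2).+1.

Lemma table_weight_hupdate s b h : size b <= (size (hlookup s h)).+1 ->
  table_weight (hupdate s b h) <= (table_weight h).+2.
Proof.
rewrite /table_weight; elim: h => [|[s0 b0] h IHh] /=; first by rewrite big_seq1 big_nil.
by case: (eqVneq s0 s) => [->|_] /= le_b; rewrite !big_cons /=; [lia | have := IHh le_b; lia].
Qed.

Fixpoint intervals (m : seq (nat * nat)) : seq (nat * nat * nat) :=
  if m is a :: ((b :: _) as t) then (a.2, a.1, b.1) :: intervals t else [::].

Lemma atom_intervalsE m : atom_intervals m = intervals m.
Proof.
elim: m => [|a [|b t] IHm] //.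
by rewrite /atom_intervals /= in IHm *; rewrite IHm.
Qed.

Lemma intervals_cat s u t :
  intervals (s ++ u :: t) = intervals (rcons s u) ++ intervals (u :: t).
Proof.
elim: s => [|a [|b s] IHs] //.
exact: (congr1 (cons (a.2, a.1, b.1)) IHs).
Qed.

Lemma size_intervals m : size (intervals m) <= size m.
Proof. by elim: m => [|a [|b t] IHm] //=; rewrite ltnS. Qed.

Lemma subseq_intervals_ids m : subseq [seq x.1.1 | x <- intervals m] (unzip2 m).
Proof. by elim: m => [|a [|b t] IHm] //=; rewrite ?sub0seq // eqxx. Qed.

Lemma intervals_keys m x :
  x \in intervals m -> (x.1.2 \in unzip1 m) && (x.2 \in unzip1 m).
Proof.
elim: m => [|a [|b t] IHm] //=; rewrite inE => /predU1P[-> | /IHm] /=.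
  by rewrite !inE !eqxx orbT.
by case/andP => lo_t hi_t; rewrite in_cons lo_t orbT in_cons hi_t orbT.
Qed.

Lemma key_outside_interval m x y : sorted ltn (unzip1 m) ->
  x \in intervals m -> y \in unzip1 m -> (y <= x.1.2) || (x.2 <= y).
Proof.
elim: m => [|a [|b t] IHm] // sorted_m.
have sorted_bt : sorted ltn (unzip1 (b :: t)) := path_sorted sorted_m.
have /allP gt_a := order_path_min ltn_trans sorted_m.
have /allP gt_b := order_path_min ltn_trans sorted_bt.
rewrite inE => /predU1P[-> | xt]; rewrite [y \in _]inE => /predU1P[-> | yt] /=.
- by rewrite leqnn.
- by move: yt; rewrite inE => /predU1P[-> | /gt_b /ltnW ->]; rewrite ?leqnn orbT.
- by case/andP: (intervals_keys (m := b :: t) xt) => /gt_a /ltnW ->.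
- exact: IHm.
Qed.

Lemma sorted_insert (T : Type) (e : rel T) s p n q t :
  sorted e (s ++ p :: q :: t) -> e p n -> e n q -> sorted e (s ++ p :: n :: q :: t).
Proof. by rewrite !sorted_cat_cons /= => /andP[-> /andP[_ ->]] -> ->. Qed.

Lemma filter_keys_split n (m : seq (nat * nat)) :
  sorted ltn (unzip1 m) -> n \notin unzip1 m ->
  m = [seq p <- m | p.1 < n] ++ [seq p <- m | n < p.1].
Proof.
elim: m => [|a t IHt] // sorted_m; rewrite inE negb_or => /andP[neq_na n_t].
have sorted_t : sorted ltn (unzip1 t) := path_sorted sorted_m.
case: (ltngtP a.1 n) => [lt_an | lt_na | eq_an]; last by rewrite eq_an eqxx in neq_na.
  by rewrite /= lt_an ltnNge (ltnW lt_an) /= -IHt.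
have /allP gt_a := order_path_min ltn_trans sorted_m.
have gt_n p : p \in t -> n < p.1 by move=> pt; rewrite (ltn_trans lt_na) ?gt_a ?map_f.
rewrite /= ltnNge (ltnW lt_na) lt_na /= (eq_in_filter (a2 := pred0)) ?filter_pred0.
  by rewrite (eq_in_filter (a2 := predT)) ?filter_predT // => p /gt_n.
by move=> p /gt_n /= lt_np; rewrite ltnNge ltnW.
Qed.

Definition covers (s : nat) (x : nat * nat * nat) (r : rule) : bool :=
  (source r == s) && (lo r <= x.1.2) && (x.2 <= hi r).

Lemma covers_sub s x y r :
  y.1.2 <= x.1.2 -> x.1.2 < x.2 -> x.2 <= y.2 ->
  (lo r <= y.1.2) || (y.2 <= lo r) -> (hi r <= y.1.2) || (y.2 <= hi r) ->
  covers s x r = covers s y r.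
Proof.
rewrite /covers => le_y1x1 lt_x le_x2y2 /orP[] lo_r /orP[] hi_r; congr (_ && _ && _);
  apply/idP/idP; lia.
Qed.

Lemma den_uniq m r : uniq [seq x.1.1 | x <- intervals m] -> uniq (den m r).
Proof.
by rewrite /den atom_intervalsE => /(subseq_uniq (map_subseq _ (filter_subseq _ _))).
Qed.

Lemma mem_den m r x : uniq [seq x.1.1 | x <- intervals m] -> x \in intervals m ->
  (x.1.1 \in den m r) = (lo r <= x.1.2) && (x.2 <= hi r).
Proof.
rewrite /den atom_intervalsE => /uniq_map_inj_in inj_id xm; apply/mapP/idP => [[y]|].
  by rewrite mem_filter => /andP[cov_y ym] /(inj_id _ _ xm ym) ->.
by exists x; rewrite // mem_filter xm andbT.
Qed.

Lemma denP m r a : a \in den m r -> exists2 x, x \in intervals m & a = x.1.1.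
Proof.
by rewrite /den atom_intervalsE => /mapP[x]; rewrite mem_filter => /andP[_ xm] ->; exists x.
Qed.

Lemma size_den m r : size (den m r) <= size m.
Proof.
rewrite /den atom_intervalsE size_map size_filter.
exact: leq_trans (count_size _ _) (size_intervals m).
Qed.

Record wf_map (k : nat) (m : seq (nat * nat)) (nid : nat) (rs : seq rule) : Prop := {
  sorted_keys : sorted ltn (unzip1 m);
  key_min : 0 \in unzip1 m;
  key_max : MAXK k \in unzip1 m;
  keys_le_max : all (fun n => n <= MAXK k) (unzip1 m);
  uniq_ids : uniq (unzip2 m);
  ids_fresh : all (fun a => a < nid) (unzip2 m);
  rule_keys : forall r, r \in rs -> (lo r \in unzip1 m) && (hi r \in unzip1 m) }.

Lemma wf_map_uniq_intervals k m nid rs :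
  wf_map k m nid rs -> uniq [seq x.1.1 | x <- intervals m].
Proof. by case=> _ _ _ _ uniq_m _ _; apply: subseq_uniq (subseq_intervals_ids m) uniq_m. Qed.

Lemma wf_map_interval_id k m nid rs x :
  wf_map k m nid rs -> x \in intervals m -> x.1.1 < nid.
Proof.
case=> _ _ _ _ _ /allP ids_lt _ xm; apply/ids_lt/(mem_subseq (subseq_intervals_ids m)).
exact: map_f.
Qed.

Lemma filter_covers_sub k m nid rs s x y : wf_map k m nid rs -> y \in intervals m ->
  y.1.2 <= x.1.2 -> x.1.2 < x.2 -> x.2 <= y.2 ->
  filter (covers s x) rs = filter (covers s y) rs.
Proof.
move=> [sorted_m _ _ _ _ _ keys_rs] ym le1 lt_x le2; apply: eq_in_filter => r /keys_rs.
by case/andP=> /(key_outside_interval sorted_m ym) lo_r /(key_outside_interval sorted_m ym);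
  apply: covers_sub.
Qed.

Definition owners_ok (m : seq (nat * nat)) (O : nat -> table) (rs : seq rule) : Prop :=
  forall x, x \in intervals m ->
    forall s, perm_eq (hlookup s (O x.1.1)) (filter (covers s x) rs).

Definition owner_upd (O : nat -> table) (a : nat) (h : table) : nat -> table :=
  fun x => if x == a then h else O x.

Definition copy_owner (O : nat -> table) (d : nat * nat) : nat -> table :=
  owner_upd O d.2 (O d.1).

Lemma split_at_new_key k m nid rs n :
  wf_map k m nid rs -> n <= MAXK k -> n \notin unzip1 m ->
  exists B p al q be A, [/\ p < n < q,
    [seq z <- m | z.1 < n] = rcons B (p, al) & [seq z <- m | n < z.1] = (q, be) :: A].
Proof.
move=> [_ key0 keyM _ _ _ _] le_nM n_m.
have n_gt0 : 0 < n by rewrite lt0n; apply: contraNneq n_m => ->.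
have n_ltM : n < MAXK k by rewrite ltn_neqAle le_nM andbT; apply: contraNneq n_m => ->.
have [p0 p0m p0_0] := mapP key0; have [pM pMm pM_M] := mapP keyM.
have : p0 \in [seq z <- m | z.1 < n] by rewrite mem_filter -p0_0 n_gt0.
have : pM \in [seq z <- m | n < z.1] by rewrite mem_filter -pM_M n_ltM.
case def_gt: [seq z <- m | n < z.1] => [//|[q be] A] _.
case/lastP def_lt: [seq z <- m | z.1 < n] => [//|B [p al]] _.
have : (q, be) \in [seq z <- m | n < z.1] by rewrite def_gt mem_head.
have : (p, al) \in [seq z <- m | z.1 < n] by rewrite def_lt mem_rcons mem_head.
rewrite !mem_filter => /andP[/= lt_pn _] /andP[/= lt_nq _].
by exists B, p, al, q, be, A; rewrite lt_pn lt_nq.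
Qed.

Section InsertKey.

Variables (k nid n p al q be : nat) (B A : seq (nat * nat)) (rs : seq rule).
Let m := B ++ [:: (p, al), (q, be) & A].
Let m' := B ++ [:: (p, al), (n, nid), (q, be) & A].

Hypothesis wf_m : wf_map k m nid rs.
Hypothesis lt_pnq : p < n < q.

Let perm_m' : perm_eq m' ((n, nid) :: m).
Proof. by apply/permP => P; rewrite /m /m' /= !count_cat /=; lia. Qed.

Lemma keys_insert_key : unzip1 m' =i n :: unzip1 m.
Proof. exact: perm_mem (perm_map _ perm_m'). Qed.

Lemma wf_map_insert_key : wf_map k m' nid.+1 rs.
Proof.
have keys' := keys_insert_key.
have ids' : perm_eq (unzip2 m') (nid :: unzip2 m) := perm_map _ perm_m'.
case: wf_m => sorted_m key0 keyM le_M uniq_ids lt_ids keys_rs.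
case/andP: lt_pnq => lt_pn lt_nq; split.
- move: sorted_m; rewrite /m /m' /unzip1 !map_cat /= => sorted_m.
  exact: sorted_insert sorted_m lt_pn lt_nq.
- by rewrite keys' in_cons key0 orbT.
- by rewrite keys' in_cons keyM orbT.
- rewrite (perm_all _ (perm_map _ perm_m')) /= le_M andbT.
  have /(allP le_M) : q \in unzip1 m by rewrite /unzip1 map_cat mem_cat /= !inE eqxx !orbT.
  exact/leq_trans/ltnW.
- rewrite (perm_uniq ids') /= uniq_ids andbT.
  by apply/negP => /(allP lt_ids); rewrite ltnn.
- by rewrite (perm_all _ ids') /= ltnSn; apply/allP => a /(allP lt_ids) /leqW.
- by move=> r /keys_rs /andP[lo_r hi_r]; rewrite !keys' !in_cons lo_r hi_r !orbT.
Qed.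

Lemma owners_ok_insert_key O : owners_ok m O rs -> owners_ok m' (copy_owner O (al, nid)) rs.
Proof.
move=> own_m.
have Em : intervals m = intervals (rcons B (p, al)) ++ (al, p, q) :: intervals ((q, be) :: A).
  by rewrite /m intervals_cat.
have Em' : intervals m' =
    intervals (rcons B (p, al)) ++ [:: (al, p, n), (nid, n, q) & intervals ((q, be) :: A)].
  by rewrite /m' intervals_cat.
have y_m : (al, p, q) \in intervals m by rewrite Em mem_cat mem_head orbT.
have al_nid : al != nid by rewrite neq_ltn (wf_map_interval_id wf_m y_m).
case/andP: lt_pnq => lt_pn lt_nq.
move=> x; rewrite Em' mem_cat !inE => /orP[xB | /or3P[/eqP-> | /eqP-> | xA]] s.
- have xm : x \in intervals m by rewrite Em mem_cat xB.
  by rewrite /copy_owner /owner_upd ltn_eqF ?(wf_map_interval_id wf_m xm) //; apply: own_m.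
- rewrite /copy_owner /owner_upd /= (negbTE al_nid) (filter_covers_sub _ wf_m y_m) ?(ltnW lt_nq) //.
  exact: own_m y_m s.
- rewrite /copy_owner /owner_upd /= eqxx (filter_covers_sub _ wf_m y_m) ?(ltnW lt_pn) //.
  exact: own_m y_m s.
- have xm : x \in intervals m by rewrite Em mem_cat inE xA !orbT.
  by rewrite /copy_owner /owner_upd ltn_eqF ?(wf_map_interval_id wf_m xm) //; apply: own_m.
Qed.

End InsertKey.

Lemma create_atom_spec k n st O rs st' d c :
  wf_map k (amap st) (next_id st) rs -> owners_ok (amap st) O rs -> n <= MAXK k ->
  create_atom n st = (st', d, c) ->
  [/\ c = lg (size (amap st)), owner st' = owner st,
      {subset n :: unzip1 (amap st) <= unzip1 (amap st')},
      size (amap st') = size (amap st) + size d &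
      wf_map k (amap st') (next_id st') rs /\ owners_ok (amap st') (foldl copy_owner O d) rs].
Proof.
move=> wf_m own_m le_nM; rewrite /create_atom; case: ifPn => [n_m [<- <- <-] | n_m].
  by split; rewrite ?addn0 // => x; rewrite inE => /predU1P[->|].
have [B [p [al [q [be [A [lt_pnq def_lt def_gt]]]]]]] := split_at_new_key wf_m le_nM n_m.
have def_m : amap st = B ++ [:: (p, al), (q, be) & A].
  by rewrite {1}(filter_keys_split (sorted_keys wf_m) n_m) def_lt def_gt cat_rcons.
rewrite def_lt def_gt last_rcons cat_rcons => -[<- <- <-] /=.
rewrite def_m in wf_m own_m *; split=> //.
- by move=> x; rewrite keys_insert_key.
- by rewrite !size_cat /= addnS addn1.
- by split; [apply: wf_map_insert_key wf_m _ | apply: owners_ok_insert_key wf_m _ _ own_m].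
Qed.

(* Label sets influence neither the costs nor the other components of a state. *)
Definition skeleton (st : state) := (amap st, next_id st, owner st).

Lemma foldl_skeleton (T : Type) (F : state * nat -> T -> state * nat) (w : T -> nat) :
  (forall st c t, skeleton (F (st, c) t).1 = skeleton st /\ (F (st, c) t).2 <= c + w t) ->
  forall l st c, skeleton (foldl F (st, c) l).1 = skeleton st /\
    (foldl F (st, c) l).2 <= c + \sum_(t <- l) w t.
Proof.
move=> F_frame; elim=> [|t l IHl] st c /=; first by rewrite big_nil addn0.
have [] := F_frame st c t; case: (F (st, c) t) => st' c' /= skel_st' le_c'.
by have [-> le_res] := IHl st' c'; rewrite big_cons; split=> //; lia.
Qed.

Lemma process_delta_spec st c a a' :
  let res := process_delta (st, c) (a, a') in
  [/\ amap res.1 = amap st, next_id res.1 = next_id st,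
      owner res.1 = copy_owner (owner st) (a, a') &
      res.2 <= c + 3 * table_weight (owner st a)].
Proof.
rewrite /process_delta; set F := (fun _ _ => _).
have F_frame st0 c0 e : skeleton (F (st0, c0) e).1 = skeleton st0 /\
    (F (st0, c0) e).2 <= c0 + (size e.2).+2.
  case: e => s b; rewrite /F /=; have := lg_leS (size b).
  by case: (top b) => [r'|] /=; split=> //; lia.
have [] := foldl_skeleton F_frame (owner st a) (upd_owner st a' (owner st a))
  (c + \sum_(e <- owner st a) (size e.2).+1).
case: (foldl _ _ _) => st' c'; rewrite /skeleton /= => -[-> -> ->] le_c'.
split=> //; apply: leq_trans le_c' _.
suff : \sum_(e <- owner st a) (size e.2).+2 <= 2 * table_weight (owner st a).
  by rewrite -/(table_weight (owner st a)); lia.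
by rewrite /table_weight mul2n -addnn -big_split; apply: leq_sum => e _ /=; lia.
Qed.

Lemma foldl_copy_owner_ind (P : table -> Prop) O d :
  (forall a, P (O a)) -> forall a, P (foldl copy_owner O d a).
Proof.
elim: d O => //= e d IHd O PO; apply: IHd => a.
by rewrite /copy_owner /owner_upd; case: ifP.
Qed.

Lemma process_deltas_spec st c d w : (forall a, table_weight (owner st a) <= w) ->
  let res := foldl process_delta (st, c) d in
  [/\ amap res.1 = amap st, next_id res.1 = next_id st,
      owner res.1 = foldl copy_owner (owner st) d & res.2 <= c + 3 * w * size d].
Proof.
elim: d st c => [|[a a'] d IHd] st c weight_st; first by split=> //=; lia.
have [] := process_delta_spec st c a a'.
case def_st': (process_delta (st, c) (a, a')) => [st' c'] /= amap_st' id_st' own_st' le_c'.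
have weight_st' x : table_weight (owner st' x) <= w.
  by rewrite own_st'; apply: (foldl_copy_owner_ind (P := fun h => table_weight h <= w) [:: _]).
rewrite (_ : foldl _ _ _ = foldl process_delta (st', c') d); last by rewrite -def_st'.
have [-> -> -> le_res] := IHd st' c' weight_st'; rewrite own_st'; split=> //.
have := weight_st a; rewrite mulnS; lia.
Qed.

Section OwnerFold.

Variables (F : state * nat -> nat -> state * nat) (g : table -> table) (w : table -> nat).

Hypothesis F_step : forall st c a, let res := F (st, c) a in
  [/\ amap res.1 = amap st, next_id res.1 = next_id st,
      owner res.1 = owner_upd (owner st) a (g (owner st a)) & res.2 = c + w (owner st a)].

Lemma foldl_owner_upd L st c B : uniq L -> (forall a, a \in L -> w (owner st a) <= B) ->
  let res := foldl F (st, c) L in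
  [/\ amap res.1 = amap st, next_id res.1 = next_id st,
      forall a, owner res.1 a = (if a \in L then g (owner st a) else owner st a) &
      res.2 <= c + size L * B].
Proof.
elim: L st c => [|a L IHL] st c; first by split=> //=; lia.
case/andP=> a_L uniq_L le_wB; have [] := F_step st c a.
case def_st': (F (st, c) a) => [st' c'] /= amap_st' id_st' own_st' def_c'.
rewrite (_ : foldl _ _ _ = foldl F (st', c') L); last by rewrite -def_st'.
have own_L x : x \in L -> owner st' x = owner st x.
  by move=> xL; rewrite own_st' /owner_upd ifN //; apply: contraNneq a_L => <-.
have le_wB' x : x \in L -> w (owner st' x) <= B by move=> xL; rewrite own_L ?le_wB ?inE ?xL ?orbT.
have [-> -> own_res le_res] := IHL st' c' uniq_L le_wB'; split=> //.
- move=> x; rewrite own_res inE; case: (eqVneq x a) => [-> | neq_xa] /=.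
    by rewrite (negbTE a_L) own_st' /owner_upd eqxx.
  by case: ifP => [/own_L -> | _] //; rewrite own_st' /owner_upd (negbTE neq_xa).
- by apply: leq_trans le_res _; have := le_wB a (mem_head _ _); rewrite /= mulSn; lia.
Qed.

End OwnerFold.

Lemma insert_at_step r : forall st c a, let res := insert_at r (st, c) a in
  [/\ amap res.1 = amap st, next_id res.1 = next_id st,
      owner res.1 = owner_upd (owner st) a
        (hupdate (source r) (r :: hlookup (source r) (owner st a)) (owner st a)) &
      res.2 = c + (3 + 2 * lg (size (hlookup (source r) (owner st a))))].
Proof.
move=> st c a; rewrite /insert_at.
by case: (top _) => [r'|]; [case: ifP => _; [case: ifP|]|]; split=> //=; lia.
Qed.

Lemma remove_at_step r : forall st c a, let res := remove_at r (st, c) a in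
  [/\ amap res.1 = amap st, next_id res.1 = next_id st,
      owner res.1 = owner_upd (owner st) a
        (hupdate (source r) (rem r (hlookup (source r) (owner st a))) (owner st a)) &
      res.2 = c + (3 + 2 * lg (size (hlookup (source r) (owner st a)))
                   + lg (size (rem r (hlookup (source r) (owner st a)))))].
Proof.
move=> st c a; rewrite /remove_at.
by case: ifP => _; [case: (top _) => [r''|]|]; split=> //=; lia.
Qed.

Section RuleUpdate.

Variables (k nid : nat) (m : seq (nat * nat)) (rs : seq rule) (r : rule) (O O' : nat -> table).
Hypothesis wf_m : wf_map k m nid rs.
Hypothesis own_m : owners_ok m O rs.

Lemma covers_den x s : x \in intervals m ->
  covers s x r = (source r == s) && (x.1.1 \in den m r).
Proof. by move=> xm; rewrite (mem_den _ (wf_map_uniq_intervals wf_m) xm) /covers -andbA. Qed.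

Lemma owners_ok_insert_rule :
  (forall a, O' a = if a \in den m r
     then hupdate (source r) (r :: hlookup (source r) (O a)) (O a) else O a) ->
  owners_ok m O' (r :: rs).
Proof.
move=> def_O' x xm s; rewrite def_O' /=; case: ifPn => [x_den | x_den].
  rewrite hlookup_hupdate (covers_den s xm) x_den andbT.
  by case: eqP => [<- | _]; rewrite ?perm_cons; apply: own_m.
by rewrite (covers_den s xm) (negbTE x_den) andbF; apply: own_m.
Qed.

Lemma owners_ok_remove_rule :
  (forall a, O' a = if a \in den m r
     then hupdate (source r) (rem r (hlookup (source r) (O a))) (O a) else O a) ->
  owners_ok m O' (rem r rs).
Proof.
move=> def_O' x xm s; rewrite def_O' filter_rem; case: ifPn => [x_den | x_den].
  rewrite hlookup_hupdate (covers_den s xm) x_den andbT.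
  by case: eqP => [<- | _]; [apply/perm_rem | ]; apply: own_m.
by rewrite (covers_den s xm) (negbTE x_den) andbF; apply: own_m.
Qed.

End RuleUpdate.

Lemma size_hlookup_owner m O rs x s : owners_ok m O rs -> x \in intervals m ->
  size (hlookup s (O x.1.1)) = count (covers s x) rs.
Proof. by move=> own_m xm; rewrite (perm_size (own_m x xm s)) size_filter. Qed.

Lemma count_covers_le_max_overlap st rs x s : x \in intervals (amap st) ->
  s \in map source rs -> count (covers s x) rs <= max_overlap st rs.
Proof.
move=> x_st s_rs; rewrite /max_overlap atom_intervalsE.
by apply: (bigmaxn_sup_seq x) => //; apply: (bigmaxn_sup_seq s).
Qed.

Lemma wf_map_size_gt0 k m nid rs : wf_map k m nid rs -> 0 < size m.
Proof. by case=> _; case: m. Qed.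

Lemma wf_map_cons k m nid rs r : wf_map k m nid rs ->
  lo r \in unzip1 m -> hi r \in unzip1 m -> wf_map k m nid (r :: rs).
Proof.
case=> ? ? ? ? ? ? keys_rs lo_r hi_r; split=> // r'.
by rewrite inE => /predU1P[-> | /keys_rs]; rewrite ?lo_r ?hi_r.
Qed.

Lemma table_weight_rule_update m r (f : seq rule -> seq rule) O O' w :
  (forall b, size (f b) <= (size b).+1) -> (forall a, table_weight (O a) <= w) ->
  (forall a, O' a = if a \in den m r
     then hupdate (source r) (f (hlookup (source r) (O a))) (O a) else O a) ->
  forall a, table_weight (O' a) <= w.+2.
Proof.
move=> size_f weight_O def_O' a; rewrite def_O'; case: ifP => _.
  by have := table_weight_hupdate (size_f (hlookup (source r) (O a))); have := weight_O a; lia.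
by have := weight_O a; lia.
Qed.

(* An operation adds at most one rule and one hash entry to each table, and a table
   copied for a new atom inherits the bound of the table it copies. *)
Definition state_inv (k : nat) (st : state) (rs : seq rule) (i : nat) : Prop :=
  [/\ wf_map k (amap st) (next_id st) rs, owners_ok (amap st) (owner st) rs &
      forall a, table_weight (owner st a) <= 2 * i].

Lemma create_endpoints_spec k r st rs i st1 d1 c1 st2 d2 c2 :
  state_inv k st rs i -> lo r <= MAXK k -> hi r <= MAXK k ->
  create_atom (lo r) st = (st1, d1, c1) -> create_atom (hi r) st1 = (st2, d2, c2) ->
  let res := foldl process_delta (st2, c1 + c2) (d1 ++ d2) in
  [/\ state_inv k res.1 rs i, (lo r \in unzip1 (amap res.1)) && (hi r \in unzip1 (amap res.1)),
      size (amap st) <= size (amap res.1) &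
      res.2 <= 2 * size (amap res.1) + 6 * i * (size (amap res.1) - size (amap st))].
Proof.
case=> wf_st own_st weight_st le_lo le_hi E1 E2.
have [def_c1 own_st1 keys_st1 size_st1 [wf_st1 own1]] := create_atom_spec wf_st own_st le_lo E1.
have [def_c2 own_st2 keys_st2 size_st2 [wf_st2 own2]] := create_atom_spec wf_st1 own1 le_hi E2.
have weight_st2 a : table_weight (owner st2 a) <= 2 * i by rewrite own_st2 own_st1.
have [] := process_deltas_spec (c1 + c2) (d1 ++ d2) weight_st2.
case: (foldl process_delta _ _) => st3 c3 /= amap3 id3 own3 cost.
rewrite /state_inv amap3 id3 own3 own_st2 own_st1 foldl_cat; split=> //.
- split=> //; do 2 apply: (foldl_copy_owner_ind (P := fun h => table_weight h <= 2 * i)).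
  exact: weight_st.
- apply/andP; split; apply: keys_st2; rewrite ?mem_head // inE.
  by rewrite keys_st1 ?mem_head ?orbT.
- by rewrite size_st2 size_st1 -addnA leq_addr.
- have := lg_le (wf_map_size_gt0 wf_st); have := lg_le (wf_map_size_gt0 wf_st1).
  move: cost; rewrite def_c1 def_c2 size_st2 size_st1 size_cat; nia.
Qed.

Lemma max_overlap_amap st st' rs : amap st' = amap st -> max_overlap st' rs = max_overlap st rs.
Proof. by rewrite /max_overlap => ->. Qed.

Lemma insert_rule_spec k r st rs i : state_inv k st rs i -> lo r <= MAXK k -> hi r <= MAXK k ->
  let res := insert_rule r st in
  [/\ state_inv k res.1 (r :: rs) i.+1, size (amap st) <= size (amap res.1) &
      res.2 <= 9 * size (amap res.1) * lg (max_overlap res.1 (r :: rs))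
               + 6 * i * (size (amap res.1) - size (amap st))].
Proof.
move=> inv_st le_lo le_hi; rewrite /insert_rule.
case E1: (create_atom (lo r) st) => [[st1 d1] c1].
case E2: (create_atom (hi r) st1) => [[st2 d2] c2].
have [] := create_endpoints_spec inv_st le_lo le_hi E1 E2.
case: (foldl process_delta _ _) => st3 c3 /= [wf3 own3 weight3] /andP[lo3 hi3] le_size cost3.
set m := amap st3 in wf3 own3 lo3 hi3 le_size cost3 *.
set X := lg (max_overlap st3 (r :: rs)).
have X_gt0 : 0 < X by [].
have le_cost a : a \in den m r ->
    3 + 2 * lg (size (hlookup (source r) (owner st3 a))) <= 5 * X.
  move=> /denP[x xm ->]; rewrite (size_hlookup_owner (source r) own3 xm).
  have : count (covers (source r) x) rs <= max_overlap st3 (r :: rs).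
    apply: leq_trans _ (count_covers_le_max_overlap (rs := r :: rs) xm (mem_head _ _)).
    by rewrite /= leq_addl.
  by move/leq_lg; rewrite -/X; lia.
have [] := foldl_owner_upd
  (g := fun h => hupdate (source r) (r :: hlookup (source r) h) h)
  (w := fun h => 3 + 2 * lg (size (hlookup (source r) h))) (insert_at_step r) (c3 + enum_cost m r)
  (den_uniq r (wf_map_uniq_intervals wf3)) le_cost.
case: (foldl _ _ _) => st4 c4 /= amap4 id4 own4 cost4.
rewrite /state_inv amap4 id4 (max_overlap_amap _ amap4) -/X; split=> //.
- split; first exact: wf_map_cons.
  + exact: owners_ok_insert_rule wf3 own3 own4.
  + by rewrite mulnS; apply: table_weight_rule_update weight3 own4.
- have le_den := size_den m r; have := lg_le (wf_map_size_gt0 wf3).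
  have : size (den m r) * (5 * X) <= size m * (5 * X) by rewrite leq_mul2r le_den orbT.
  have : size m <= size m * X by rewrite leq_pmulr.
  move: cost4; rewrite /enum_cost -/m; lia.
Qed.

Lemma wf_map_rem k m nid rs r : wf_map k m nid rs -> wf_map k m nid (rem r rs).
Proof. by case=> ? ? ? ? ? ? keys_rs; split=> // r' /mem_rem /keys_rs. Qed.

Lemma remove_rule_spec k r st rs i : state_inv k st rs i -> r \in rs ->
  let res := remove_rule r st in
  [/\ state_inv k res.1 (rem r rs) i.+1, amap res.1 = amap st &
      res.2 <= 8 * size (amap st) * lg (max_overlap st rs)].
Proof.
case=> wf_st own_st weight_st r_rs; rewrite /remove_rule.
set m := amap st in wf_st own_st *; set X := lg (max_overlap st rs).
have X_gt0 : 0 < X by [].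
have le_cost a : a \in den m r ->
    3 + 2 * lg (size (hlookup (source r) (owner st a)))
      + lg (size (rem r (hlookup (source r) (owner st a)))) <= 6 * X.
  move=> /denP[x xm ->].
  have := leq_lg (size_subseq (rem_subseq r (hlookup (source r) (owner st x.1.1)))).
  rewrite (size_hlookup_owner (source r) own_st xm).
  have /leq_lg : count (covers (source r) x) rs <= max_overlap st rs.
    exact: count_covers_le_max_overlap xm (map_f _ r_rs).
  by rewrite -/X; lia.
have [] := foldl_owner_upd
  (g := fun h => hupdate (source r) (rem r (hlookup (source r) h)) h)
  (w := fun h => 3 + 2 * lg (size (hlookup (source r) h))
                   + lg (size (rem r (hlookup (source r) h))))
  (remove_at_step r) (enum_cost m r) (den_uniq r (wf_map_uniq_intervals wf_st)) le_cost.
case: (foldl _ _ _) => st' c' /= amap' id' own' cost'.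
rewrite /state_inv amap' id'; split=> //.
- split; first exact: wf_map_rem.
  + exact: owners_ok_remove_rule wf_st own_st own'.
  + rewrite mulnS; apply: table_weight_rule_update weight_st own' => b.
    exact: leqW (size_subseq (rem_subseq _ _)).
- have le_den := size_den m r; have := lg_le (wf_map_size_gt0 wf_st).
  have : size (den m r) * (6 * X) <= size m * (6 * X) by rewrite leq_mul2r le_den orbT.
  have : size m <= size m * X by rewrite leq_pmulr.
  move: cost'; rewrite /enum_cost -/m; lia.
Qed.

Lemma step_spec k E st rs i o : state_inv k st rs i ->
  match o with Ins r => wf_rule k E r /\ r \notin rs | Rem r => wf_rule k E r /\ r \in rs end ->
  let res := step st o in
  [/\ state_inv k res.1 (upd_rules rs o) i.+1, size (amap st) <= size (amap res.1) &
      res.2 <= 9 * size (amap res.1)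
                 * lg (maxn (max_overlap st rs) (max_overlap res.1 (upd_rules rs o)))
               + 6 * i * (size (amap res.1) - size (amap st))].
Proof.
move=> inv_st; case: o => r [[/andP[lt_lohi le_hi] _] r_rs] /=.
  have [inv' le_size cost] := insert_rule_spec inv_st (ltnW (leq_trans lt_lohi le_hi)) le_hi.
  split=> //; apply: leq_trans cost _; rewrite leq_add2r leq_mul2l leq_lg ?orbT //.
  exact: leq_maxr.
have [inv' amap' cost] := remove_rule_spec inv_st r_rs.
rewrite amap' subnn muln0 addn0; split=> //; apply: leq_trans cost _.
by apply: leq_mul; [apply: leq_mul | apply/leq_lg/leq_maxl].
Qed.

Definition final_state (st : state) (ops : seq op) : state := last st (states st ops).

Definition overlap_run (st : state) (rs : seq rule) (ops : seq op) : nat :=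
  \max_(p <- zip (states st ops) (rule_sets rs ops)) max_overlap p.1 p.2.

Lemma final_state_cons st o os : final_state st (o :: os) = final_state (step st o).1 os.
Proof. by rewrite /final_state /=; case: os. Qed.

Lemma overlap_run_cons st rs o os : overlap_run st rs (o :: os) =
  maxn (max_overlap st rs) (overlap_run (step st o).1 (upd_rules rs o) os).
Proof. by rewrite /overlap_run /= big_cons. Qed.

Lemma max_overlap_le_run st rs os : max_overlap st rs <= overlap_run st rs os.
Proof. by case: os => [|o os]; rewrite /overlap_run /= big_cons leq_maxl. Qed.

Lemma run_cost_spec k E R ops : forall st rs i, state_inv k st rs i -> valid_from k E rs ops ->
  i + size ops <= R ->
  let fin := final_state st ops in
  [/\ state_inv k fin (foldl upd_rules rs ops) (i + size ops), size (amap st) <= size (amap fin) &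
      run_cost st ops <= size ops * (9 * size (amap fin) * lg (overlap_run st rs ops))
                         + 6 * R * (size (amap fin) - size (amap st))].
Proof.
elim: ops => [|o os IHos] st rs i inv_st; first by rewrite addn0 /=; split=> //; lia.
case=> valid_o [_ valid_os] le_R; rewrite final_state_cons overlap_run_cons /=.
have [inv' le_size cost_o] := step_spec inv_st valid_o.
set st' := (step st o).1 in inv' le_size cost_o *.
have [] := IHos _ _ _ inv' valid_os (leq_trans _ le_R); first by rewrite addSnnS.
rewrite addSnnS; set N' := size (amap (final_state st' os)).
move=> inv_fin le_size' cost_os; split=> //; first exact: leq_trans le_size le_size'.
set X := lg (maxn _ _).
have le_o : 9 * size (amap st') * lg (maxn (max_overlap st rs) (max_overlap st' (upd_rules rs o)))
    <= 9 * N' * X.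
  by rewrite leq_mul ?leq_mul2l ?le_size' ?orbT // leq_lg // geq_max leq_maxl /=
    (leq_trans (max_overlap_le_run _ _ os)) ?leq_maxr.
have le_os : size os * (9 * N' * lg (overlap_run st' (upd_rules rs o) os))
    <= size os * (9 * N' * X) by rewrite leq_mul2l leq_mul2l leq_lg ?leq_maxr ?orbT.
have le_i : 6 * i * (size (amap st') - size (amap st))
    <= 6 * R * (size (amap st') - size (amap st)) by rewrite leq_mul2r leq_mul2l; lia.
have -> : N' - size (amap st) = (N' - size (amap st')) + (size (amap st') - size (amap st)).
  by lia.
by rewrite mulnDr mulSn; lia.
Qed.

Lemma state_inv_init k : state_inv k (init_state k) [::] 0.
Proof.
have MAX_gt0 : 0 < MAXK k by rewrite expn_gt0.
split=> //=; last by rewrite /table_weight big_nil.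
by split=> //=; rewrite ?MAX_gt0 ?mem_head ?inE ?eqxx ?orbT ?leqnn.
Qed.

Lemma wf_map_size_le_count k m nid rs : wf_map k m nid rs ->
  size m <= 2 * count (fun p : nat * nat => p.1 < MAXK k) m.
Proof.
case=> sorted_m key0 keyM le_M _ _ _.
have uniq_keys : uniq (unzip1 m) := sorted_uniq ltn_trans ltnn sorted_m.
have count_max : count (predC (fun p : nat * nat => p.1 < MAXK k)) m = 1.
  have := count_uniq_mem (MAXK k) uniq_keys; rewrite keyM /unzip1 count_map /= => <-.
  apply: eq_in_count => p pm /=; rewrite -leqNgt eq_sym eqn_leq.
  by have /(allP le_M) -> := map_f fst pm; rewrite andbT.
have [p0 p0m p0_0] := mapP key0.
have : 0 < count (fun p : nat * nat => p.1 < MAXK k) m.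
  by rewrite -has_count; apply/hasP; exists p0; rewrite // -p0_0 expn_gt0.
by have := count_predC (fun p : nat * nat => p.1 < MAXK k) m; rewrite count_max; lia.
Qed.

Theorem theorem1 :
  exists c : nat, forall (k : nat) (E : rel nat) (ops : seq op),
    0 < k -> valid_from k E [::] ops ->
    run_cost (init_state k) ops
      <= c * size ops * num_atoms k ops * lg (max_overlap_run k ops).
Proof.
exists 30 => k E ops _ valid.
have [[wf_fin _ _] _ cost] := run_cost_spec (state_inv_init k) valid (leqnn (size ops)).
have le_NK := wf_map_size_le_count wf_fin.
move: cost le_NK; rewrite -/(max_overlap_run k ops) -/(num_atoms k ops).
set N := size (amap _); set X := lg _ => cost le_NK.
have : size ops * N <= size ops * N * X by rewrite leq_pmulr.
have : size ops * N * X <= size ops * (2 * num_atoms k ops) * X.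
  by rewrite leq_mul2r leq_mul2l le_NK !orbT.
nia.
Qed.
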